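(* Let $\kappa$ and $\lambda$ be uncountable cardinals. If there exists a $\kappa$-complete non-principal ultrafilter $\mathcal U$ on $\lambda$, then $\ell_\infty(\lambda)$ admits an equivalent norm for which it is $\mathrm{SQ}_{<\kappa}$.
   Context: A non-principal ultrafilter is $\kappa$-complete if it is closed under intersections of fewer than $\kappa$ of its members. A Banach space $Z$ is $\mathrm{SQ}_{<\kappa}$ if for every set $A\subset S_Z$ with $|A|<\kappa$ there exists $y\in S_Z$ with $\|x\pm y\|\le 1$ for all $x\in A$. *)

From mathcomp Require Import all_boot all_order all_algebra.
From mathcomp Require Import all_classical all_reals.
Set Implicit Arguments. Unset Strict Implicit. Unset Printing Implicit Defensive.
Import Order.TTheory GRing.Theory Num.Theory.
Local Open Scope classical_set_scope.
Local Open Scope ring_scope.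

Definition card_lt {T U} (A : set T) (B : set U) : Prop :=
  (A #<= B)%card /\ ~ (B #<= A)%card.

(* uncountable type (cardinal represented by a type) *)
Definition uncountable_type (T : Type) : Prop := ~ countable [set: T].

(* ultrafilter on L, non-principal, kappa-complete where kappa = |K| *)
Definition ultrafilter_on {L} (U : set (set L)) : Prop :=
  [/\ U setT, ~ U set0,
      (forall A B, U A -> U B -> U (A `&` B)),
      (forall A B, A `<=` B -> U A -> U B) &
      (forall A, U A \/ U (~` A))].

Definition nonprincipal {L} (U : set (set L)) : Prop :=
  forall x : L, ~ U [set x].

Definition kappa_complete (K : Type) {L} (U : set (set L)) : Prop :=
  forall F : set (set L), F `<=` U -> card_lt F [set: K] ->
    U (\bigcap_(A in F) A).

Definition bounded_fun {R : realType} {L} (x : L -> R) : Prop :=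
  exists M : R, forall i, `|x i| <= M.

Definition linf_norm {R : realType} {L} (x : L -> R) : R :=
  sup (range (fun i => `|x i|)).

Definition equiv_norm_linf {R : realType} {L} (N : (L -> R) -> R) : Prop :=
  [/\ (forall x, bounded_fun x -> N x = 0 -> x = (fun=> 0)),
      (forall (a : R) x, bounded_fun x -> N (fun i => a * x i) = `|a| * N x),
      (forall x y, bounded_fun x -> bounded_fun y ->
          N (fun i => x i + y i) <= N x + N y) &
      (exists c C : R, [/\ 0 < c, 0 < C &
          forall x, bounded_fun x ->
            c * linf_norm x <= N x /\ N x <= C * linf_norm x])].

(* (ell_infinity(L), N) is SQ_{<kappa}, kappa = |K| *)
Definition SQ_lt (K : Type) {R : realType} {L} (N : (L -> R) -> R) : Prop :=
  forall A : set (L -> R),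
    A `<=` [set x | bounded_fun x /\ N x = 1] -> card_lt A [set: K] ->
    exists y : L -> R, [/\ bounded_fun y, N y = 1 &
      forall x, A x -> N (fun i => x i + y i) <= 1 /\ N (fun i => x i - y i) <= 1].

(* A kappa-complete ultrafilter U is in particular countably complete, so every
   bounded x : L -> R is constant, with value lim_U x, on a set of U.  Put
   N x := max (|lim_U x|, ||x - lim_U x||_oo / 2), a norm between ||.||_oo / 3
   and ||.||_oo.  Given fewer than kappa unit vectors x, the sets
   [x = lim_U x] meet in a set of U; pick s there and take y := 2 e_s.  As U is
   non-principal, lim_U y = 0 and N y = 1, and x +- y differs from x only at s,
   where x - lim_U x = 0, so N (x +- y) <= 1. *)
From mathcomp Require Import all_boot all_order all_algebra.
From mathcomp Require Import all_classical all_reals.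
From mathcomp Require Import lra.
Set Implicit Arguments. Unset Strict Implicit. Unset Printing Implicit Defensive.
Import Order.TTheory GRing.Theory Num.Theory.
Local Open Scope classical_set_scope.
Local Open Scope ring_scope.

Section Ultrafilter.
Variables (T : Type) (U : set (set T)).
Hypothesis hU : ultrafilter_on U.

Lemma ultra_setT : U setT. Proof. by case: hU. Qed.

Lemma ultra_setI A B : U A -> U B -> U (A `&` B).
Proof. by case: hU => _ _ + _ _; apply. Qed.

Lemma ultra_sub A B : U A -> A `<=` B -> U B.
Proof. by move=> UA AB; case: hU => _ _ _ /(_ A B AB UA). Qed.

Lemma ultra_setC A : ~ U A -> U (~` A).
Proof. by case: hU => _ _ _ _ /(_ A) []. Qed.

Lemma ultra_neq0 A : U A -> A !=set0.
Proof.
move=> UA; apply: contrapT => /set0P/negP/negbNE/eqP A0.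
by case: hU => _ + _ _ _; rewrite -A0.
Qed.

End Ultrafilter.

Section KappaComplete.
Variables (T : Type) (U : set (set T)).

Lemma kappa_complete_bigcap (K I : Type) (f : I -> set T) (A : set I) :
  kappa_complete K U -> card_lt A [set: K] -> (forall i, A i -> U (f i)) ->
  U (\bigcap_(i in A) f i).
Proof.
move=> hk [AK KA] Uf.
have -> : \bigcap_(i in A) f i = \bigcap_(B in f @` A) B by rewrite bigcap_image.
apply: hk.
  by move=> _ [i Ai <-]; apply: Uf.
split; first exact: card_le_trans (card_image_le f A) AK.
by move=> /card_le_trans/(_ (card_image_le f A)).
Qed.

Lemma kappa_complete_sigma (K : Type) (G : nat -> set T) :
  uncountable_type K -> kappa_complete K U -> (forall n, U (G n)) ->
  U (\bigcap_n G n).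
Proof.
move=> Kunc hk UG; apply: (kappa_complete_bigcap hk) => //; split => //.
by apply/infiniteP => /finite_set_countable.
Qed.

End KappaComplete.

Section Bounded.
Variables (R : realType) (L : Type).
Implicit Types (x y : L -> R) (a : R).

Lemma bounded_fun_cst a : bounded_fun (fun _ : L => a).
Proof. by exists `|a|. Qed.

Lemma bounded_funD x y : bounded_fun x -> bounded_fun y ->
  bounded_fun (fun i => x i + y i).
Proof.
move=> [M hM] [N hN]; exists (M + N) => i.
exact: le_trans (ler_normD _ _) (lerD (hM i) (hN i)).
Qed.

Lemma bounded_funN x : bounded_fun x -> bounded_fun (fun i => - x i).
Proof. by move=> [M hM]; exists M => i; rewrite normrN. Qed.

Lemma bounded_funB x y : bounded_fun x -> bounded_fun y ->
  bounded_fun (fun i => x i - y i).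
Proof. by move=> bx /bounded_funN; apply: bounded_funD. Qed.

Lemma bounded_funZ a x : bounded_fun x -> bounded_fun (fun i => a * x i).
Proof. by move=> [M hM]; exists (`|a| * M) => i; rewrite normrM ler_wpM2l. Qed.

Lemma linf_norm_ub x i : bounded_fun x -> `|x i| <= linf_norm x.
Proof.
move=> [M hM]; apply: ub_le_sup; last by exists i.
by exists M => _ [j _ <-].
Qed.

(* The hypothesis [0 <= M] covers an empty [L], where [sup set0 = 0]. *)
Lemma linf_norm_le x M : 0 <= M -> (forall i, `|x i| <= M) -> linf_norm x <= M.
Proof.
move=> M0 hM; have [ne|] := pselect (range (fun i => `|x i|) !=set0).
  by apply: ge_sup ne _ => _ [j _ <-].
by move=> /set0P/negP/negbNE/eqP r0; rewrite /linf_norm r0 sup0.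
Qed.

End Bounded.

Section UltraLimit.
Variables (R : realType) (L : Type) (U : set (set L)).
Hypothesis hU : ultrafilter_on U.
Hypothesis hsigma : forall G : nat -> set L, (forall n, U (G n)) ->
  U (\bigcap_n G n).
Implicit Types (x y : L -> R) (a : R).

Lemma ultra_const_uniq x a b :
  U [set i | x i = a] -> U [set i | x i = b] -> a = b.
Proof.
by move=> Ua Ub; have [i [/= <- <-]] := ultra_neq0 hU (ultra_setI hU Ua Ub).
Qed.

(* The ultralimit is the supremum of the [t] such that [t <= x] holds U-a.e. *)
Lemma ultra_bounded_approx x : bounded_fun x ->
  exists a, forall e, 0 < e -> U [set i | `|x i - a| < e].
Proof.
move=> [M hM]; pose E := [set t : R | U [set i | t <= x i]].
have hxM i : - M <= x i <= M by rewrite -ler_norml.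
have E_nM : E (- M).
  by apply: (ultra_sub hU (ultra_setT hU)) => i _; case/andP: (hxM i).
have E_ub : ubound E M.
  move=> t Et; have [i /= ti] := ultra_neq0 hU Et.
  by apply: le_trans ti _; case/andP: (hxM i).
have hsup : has_sup E by split; [exists (- M) | exists M].
exists (sup E) => e e0.
have [t Et te] := sup_adherent e0 hsup.
have Ulo : U [set i | sup E - e < x i].
  by apply: (ultra_sub hU Et) => i /=; apply: lt_le_trans te.
have Uhi : U [set i | x i < sup E + e].
  have nE : ~ E (sup E + e).
    by move=> /(sup_upper_bound hsup); rewrite gerDl leNgt e0.
  by apply: (ultra_sub hU (ultra_setC hU nE)) => i /= /negP; rewrite -ltNge.
apply: (ultra_sub hU (ultra_setI hU Ulo Uhi)) => i [/= lo hi].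
by rewrite ltr_norml; apply/andP; split; lra.
Qed.

Lemma ultra_bounded_const x : bounded_fun x -> exists a, U [set i | x i = a].
Proof.
move=> /ultra_bounded_approx [a Ua]; exists a.
have Un n : U [set i | `|x i - a| < n.+1%:R^-1] by apply/Ua; rewrite invr_gt0.
apply: (ultra_sub hU (hsigma Un)) => i /= hi; apply/eqP; rewrite -subr_eq0.
rewrite -normr_eq0 eq_le normr_ge0 andbT leNgt; apply/negP => /ltr_add_invr[n].
by rewrite add0r => /lt_trans/(_ (hi n I)); rewrite ltxx.
Qed.

Definition ulim x : R := xget 0 [set a | U [set i | x i = a]].

Lemma ulimP x : bounded_fun x -> U [set i | x i = ulim x].
Proof. by move=> /ultra_bounded_const ex; apply: (xgetPex 0 ex). Qed.

Lemma ulimE x a : U [set i | x i = a] -> ulim x = a.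
Proof. by move=> Ua; apply: xget_unique => // b /ultra_const_uniq; apply. Qed.

Lemma ulimD x y : bounded_fun x -> bounded_fun y ->
  ulim (fun i => x i + y i) = ulim x + ulim y.
Proof.
move=> bx by_; apply: ulimE.
by apply: (ultra_sub hU (ultra_setI hU (ulimP bx) (ulimP by_))) => i [/= -> ->].
Qed.

Lemma ulimN x : bounded_fun x -> ulim (fun i => - x i) = - ulim x.
Proof. by move=> bx; apply: ulimE; apply: (ultra_sub hU (ulimP bx)) => i /= ->. Qed.

Lemma ulimZ a x : bounded_fun x -> ulim (fun i => a * x i) = a * ulim x.
Proof. by move=> bx; apply: ulimE; apply: (ultra_sub hU (ulimP bx)) => i /= ->. Qed.

Lemma ulim_le_linf x : bounded_fun x -> `|ulim x| <= linf_norm x.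
Proof.
by move=> bx; have [i /= <-] := ultra_neq0 hU (ulimP bx); apply: linf_norm_ub.
Qed.

Definition ultra_norm x : R :=
  Num.max `|ulim x| (linf_norm (fun i => x i - ulim x) / 2).

Lemma ultra_norm_ge_ulim x : `|ulim x| <= ultra_norm x.
Proof. by rewrite le_max lexx. Qed.

Lemma ultra_norm_ge0 x : 0 <= ultra_norm x.
Proof. exact: le_trans (normr_ge0 _) (ultra_norm_ge_ulim x). Qed.

Lemma ultra_norm_ge_dev x i : bounded_fun x -> `|x i - ulim x| <= 2 * ultra_norm x.
Proof.
move=> bx; have := linf_norm_ub i (bounded_funB bx (bounded_fun_cst _ (ulim x))).
have : linf_norm (fun i => x i - ulim x) / 2 <= ultra_norm x.
  by rewrite le_max lexx orbT.
lra.
Qed.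

Lemma ultra_norm_le x M : `|ulim x| <= M -> (forall i, `|x i - ulim x| <= 2 * M) ->
  ultra_norm x <= M.
Proof.
move=> h1 h2; have M0 : 0 <= M := le_trans (normr_ge0 _) h1.
rewrite ge_max h1 /=; have := linf_norm_le (mulr_ge0 (ler0n _ 2) M0) h2; lra.
Qed.

Lemma ultra_norm_eq0 x : bounded_fun x -> ultra_norm x = 0 -> x = (fun=> 0).
Proof.
move=> bx N0; have := ultra_norm_ge_ulim x; rewrite N0 normr_le0 => /eqP l0.
apply: funext => i; have := ultra_norm_ge_dev i bx.
by rewrite N0 l0 mulr0 subr0 normr_le0 => /eqP.
Qed.

Lemma ultra_normZ_le a x : bounded_fun x ->
  ultra_norm (fun i => a * x i) <= `|a| * ultra_norm x.
Proof.
move=> bx; apply: ultra_norm_le; rewrite ulimZ //.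
  by rewrite normrM ler_wpM2l ?ultra_norm_ge_ulim.
by move=> i; rewrite -mulrBr normrM mulrCA ler_wpM2l ?ultra_norm_ge_dev.
Qed.

Lemma ultra_normZ a x : bounded_fun x ->
  ultra_norm (fun i => a * x i) = `|a| * ultra_norm x.
Proof.
move=> bx; apply/le_anti; rewrite ultra_normZ_le //=.
have [->|a0] := eqVneq a 0; first by rewrite normr0 mul0r ultra_norm_ge0.
have a_gt0 : 0 < `|a| by rewrite normr_gt0.
have := ultra_normZ_le a^-1 (bounded_funZ a bx).
under eq_fun do rewrite mulrA mulVf // mul1r.
by rewrite normrV ?unitfE // -(ler_pM2l a_gt0) mulrA mulfV ?gt_eqF // mul1r.
Qed.

Lemma ultra_normD x y : bounded_fun x -> bounded_fun y ->
  ultra_norm (fun i => x i + y i) <= ultra_norm x + ultra_norm y.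
Proof.
move=> bx by_; apply: ultra_norm_le; rewrite ulimD //.
  apply: le_trans (ler_normD _ _) _.
  exact: lerD (ultra_norm_ge_ulim x) (ultra_norm_ge_ulim y).
move=> i; rewrite opprD addrACA mulrDr.
apply: le_trans (ler_normD _ _) _.
exact: lerD (ultra_norm_ge_dev i bx) (ultra_norm_ge_dev i by_).
Qed.

Lemma linf_le_ultra_norm x : bounded_fun x -> linf_norm x <= 3 * ultra_norm x.
Proof.
move=> bx; apply: linf_norm_le => [|i]; first by rewrite mulr_ge0 ?ultra_norm_ge0.
have := ler_normD (x i - ulim x) (ulim x); rewrite subrK.
have := ultra_norm_ge_dev i bx; have := ultra_norm_ge_ulim x; lra.
Qed.

Lemma ultra_norm_le_linf x : bounded_fun x -> ultra_norm x <= linf_norm x.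
Proof.
move=> bx; apply: ultra_norm_le => [|i]; first exact: ulim_le_linf.
have := ler_normB (x i) (ulim x); have := ulim_le_linf bx.
have := linf_norm_ub i bx; lra.
Qed.

Lemma ultra_norm_equiv : equiv_norm_linf ultra_norm.
Proof.
split; [exact: ultra_norm_eq0 | exact: ultra_normZ | exact: ultra_normD |].
exists 3^-1, 1; split => // [|x bx]; first by rewrite invr_gt0.
split; last by rewrite mul1r ultra_norm_le_linf.
by have := linf_le_ultra_norm bx; lra.
Qed.

Lemma ultra_norm_perturb x z : bounded_fun x -> bounded_fun z ->
  ultra_norm x <= 1 -> ulim z = 0 -> (forall i, `|z i| <= 2) ->
  (forall i, z i != 0 -> x i = ulim x) ->
  ultra_norm (fun i => x i + z i) <= 1.
Proof.
move=> bx bz Nx z0 z2 hz; apply: ultra_norm_le; rewrite ulimD // z0 addr0.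
  exact: le_trans (ultra_norm_ge_ulim x) Nx.
move=> i; rewrite mulr1 addrAC.
have [zi0|/hz ->] := eqVneq (z i) 0; last by rewrite subrr add0r.
by rewrite zi0 addr0; have := ultra_norm_ge_dev i bx; lra.
Qed.

Definition bump (s : L) : L -> R := fun i => if pselect (i = s) then 2 else 0.

Lemma bump_id s : bump s s = 2.
Proof. by rewrite /bump; case: pselect. Qed.

Lemma bump_eq0 s i : i <> s -> bump s i = 0.
Proof. by rewrite /bump; case: pselect. Qed.

Lemma normr_bump_le s i : `|bump s i| <= 2.
Proof. by rewrite /bump; case: pselect => ?; rewrite ?normr0 ?ger0_norm. Qed.

Lemma bounded_bump s : bounded_fun (bump s).
Proof. by exists 2; apply: normr_bump_le. Qed.

Hypothesis hnp : nonprincipal U.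

Lemma ulim_bump s : ulim (bump s) = 0.
Proof.
by apply: ulimE; apply: (ultra_sub hU (ultra_setC hU (@hnp s))) => i /bump_eq0.
Qed.

Lemma ultra_norm_bump s : ultra_norm (bump s) = 1.
Proof.
apply/le_anti/andP; split.
  apply: ultra_norm_le => [|i]; first by rewrite ulim_bump normr0.
  by rewrite ulim_bump subr0 mulr1 normr_bump_le.
have := ultra_norm_ge_dev s (bounded_bump s).
by rewrite ulim_bump subr0 bump_id ger0_norm //; lra.
Qed.

Lemma ultra_norm_SQ (K : Type) : kappa_complete K U -> SQ_lt K ultra_norm.
Proof.
move=> hk A hA hAK.
have UA : U (\bigcap_(x in A) [set i | x i = ulim x]).
  by apply: (kappa_complete_bigcap hk hAK) => x /hA [bx _]; apply: ulimP.
have [s hs] := ultra_neq0 hU UA.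
exists (bump s); split; [exact: bounded_bump | exact: ultra_norm_bump |].
move=> x Ax; have [bx Nx1] := hA _ Ax.
have Nx : ultra_norm x <= 1 by rewrite Nx1.
have supp i : bump s i != 0 -> x i = ulim x.
  by have [-> _|/bump_eq0 ->] := pselect (i = s); [exact: hs x Ax | rewrite eqxx].
split; apply: ultra_norm_perturb => //.
- exact: bounded_bump.
- exact: ulim_bump.
- exact: normr_bump_le.
- exact/bounded_funN/bounded_bump.
- by rewrite ulimN ?ulim_bump ?oppr0 //; apply: bounded_bump.
- by move=> i; rewrite normrN normr_bump_le.
- by move=> i; rewrite oppr_eq0; apply: supp.
Qed.

End UltraLimit.

Theorem proposition3p6 (R : realType) (K L : Type) :
  uncountable_type K -> uncountable_type L ->
  (exists U : set (set L), [/\ ultrafilter_on U, nonprincipal U & kappa_complete K U]) ->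
  exists N : (L -> R) -> R, equiv_norm_linf N /\ SQ_lt K N.
Proof.
move=> Kunc _ [U [hU hnp hk]].
have hsigma := kappa_complete_sigma Kunc hk.
exists (ultra_norm U); split; first exact: ultra_norm_equiv hU hsigma.
exact: (ultra_norm_SQ hU hsigma hnp hk).
Qed.
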